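(* Let $u$ be a solution of the linear equation $\partial_tu=\Delta u$ on $[0,\infty)\times\mathbb{Z}$ with initial data $u_0\in\ell^\infty_+(\mathbb{Z})$. Then for every $k\in\mathbb{Z}$, $N\in\mathbb{N}$ and $t\ge0$, $$u(t,k)\ge M(u_0,k,N)\,e^{-2t}I_N(2t),\qquad M(u_0,k,N)=\sum_{l=-N}^Nu_0(k-l).$$
   Context: $\Delta v(k)=v(k-1)-2v(k)+v(k+1)$. A solution: $u\in C^0([0,\infty);\ell^\infty_+(\mathbb{Z}))$ with $u(0)=u_0$, each $u(\cdot,k)$ $C^1$ on $(0,\infty)$ satisfying the equation pointwise. $I_N$ is the modified Bessel function of the first kind of order $N$, $I_N(s)=\frac1\pi\int_0^\pi e^{s\cos\theta}\cos(N\theta)\,d\theta$. *)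

From Stdlib Require Import Reals ZArith Lra.
From Coquelicot Require Import Coquelicot.
Open Scope R_scope.

Definition lap (v : Z -> R) (k : Z) : R :=
  v (k - 1)%Z - 2 * v k + v (k + 1)%Z.

Definition linf_plus (v : Z -> R) : Prop :=
  (exists B : R, forall k, Rabs (v k) <= B) /\ (forall k, 0 <= v k).

Definition C0_linf_plus (u : R -> Z -> R) : Prop :=
  (forall t, 0 <= t -> linf_plus (u t)) /\
  (forall t, 0 <= t -> forall eps, 0 < eps -> exists delta, 0 < delta /\
     forall s, 0 <= s -> Rabs (s - t) < delta -> forall k, Rabs (u s k - u t k) <= eps).

Definition is_solution (u0 : Z -> R) (u : R -> Z -> R) : Prop :=
  C0_linf_plus u /\
  (forall k, u 0 k = u0 k) /\
  (forall k t, 0 < t ->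
     is_derive (fun s => u s k) t (lap (u t) k) /\
     continuous (fun s => Derive (fun s' => u s' k) s) t).

Definition besselI (N : nat) (s : R) : R :=
  / PI * RInt (fun th => exp (s * cos th) * cos (INR N * th)) 0 PI.

(* M(u0,k,N) = sum_{l=-N}^{N} u0(k-l), indexed by j = l + N in 0..2N *)
Definition Mmass (u0 : Z -> R) (k : Z) (N : nat) : R :=
  sum_f_R0 (fun j => u0 (k - (Z.of_nat j - Z.of_nat N))%Z) (2 * N).

From Stdlib Require Import Reals ZArith Lra Lia Classical.
From Coquelicot Require Import Coquelicot.
Open Scope R_scope.

(* The kernel g t l = e^{-2t} I_l(2t) = (1/pi) int_0^pi e^{2t(cos th - 1)} cos(l th) dth
   solves the lattice heat equation with g 0 = delta_0, so the superposition
   v = sum_{|l| <= N} u0(k-l) g(. - (k-l)) is a solution with v(0) <= u0.  A maximum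
   principle on Z (perturb by the strict supersolution eps e^{3t}(1+j^2), which is
   positive at infinity, and run a real induction in time) gives v <= u.  The same
   principle applied to the differences g t m - g t (m+1), reflected onto all of Z by
   the evenness of g t, shows that g t l decreases in |l|; hence
   v t k >= M(u0,k,N) g t N. *)

(** * The lattice heat kernel *)

Definition heat_integrand (t : R) (l : Z) (th : R) : R :=
  exp (2 * t * (cos th - 1)) * cos (IZR l * th).

Definition heat_kernel (t : R) (l : Z) : R :=
  / PI * RInt (heat_integrand t l) 0 PI.

Lemma ex_RInt_heat_integrand t l : ex_RInt (heat_integrand t l) 0 PI.
Proof.
  apply (ex_RInt_continuous (V := R_CompleteNormedModule)); intros th _.
  apply (ex_derive_continuous (K := R_AbsRing) (V := R_NormedModule)).
  unfold heat_integrand; auto_derive; auto.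
Qed.

Lemma heat_integrand_derive t l th :
  is_derive (fun s => heat_integrand s l th) t (lap (fun m => heat_integrand t m th) l).
Proof.
  unfold heat_integrand, lap; auto_derive; [exact I|].
  rewrite minus_IZR, plus_IZR.
  replace ((IZR l - 1) * th) with (IZR l * th - th) by ring.
  replace ((IZR l + 1) * th) with (IZR l * th + th) by ring.
  rewrite cos_minus, cos_plus; ring.
Qed.

Lemma RInt_lap (f : Z -> R -> R) (a b : R) (l : Z) :
  (forall m, ex_RInt (f m) a b) ->
  RInt (fun x => lap (fun m => f m x) l) a b = lap (fun m => RInt (f m) a b) l.
Proof.
  intros Hf. unfold lap. apply is_RInt_unique.
  apply (is_RInt_plus (V := R_CompleteNormedModule));
    [apply (is_RInt_minus (V := R_CompleteNormedModule));
       [|apply (is_RInt_scal (V := R_CompleteNormedModule))]|];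
    apply (RInt_correct (V := R_CompleteNormedModule)), Hf.
Qed.

Lemma heat_kernel_derive t l :
  is_derive (fun s => heat_kernel s l) t (lap (heat_kernel t) l).
Proof.
  assert (Hint : is_derive (fun s => RInt (heat_integrand s l) 0 PI) t
                   (RInt (fun th => lap (fun m => heat_integrand t m th) l) 0 PI)).
  { rewrite (RInt_ext _ (fun th => Derive (fun s => heat_integrand s l th) t)).
    2: { intros th _; symmetry; apply is_derive_unique, heat_integrand_derive. }
    apply (is_derive_RInt_param (fun s th => heat_integrand s l th)).
    - apply filter_forall; intros s th _; eexists; apply heat_integrand_derive.
    - intros th _.
      apply continuity_2d_pt_ext with (f := fun s th => 2 * (cos th - 1) * heat_integrand s l th).
      { intros s th'; symmetry; apply is_derive_unique.
        unfold heat_integrand; auto_derive; auto; ring. }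
      unfold heat_integrand.
      repeat first
        [ apply continuity_2d_pt_mult | apply continuity_2d_pt_minus
        | apply continuity_2d_pt_const | apply continuity_2d_pt_id1 | apply continuity_2d_pt_id2
        | apply continuity_1d_2d_pt_comp; [apply continuity_cos|]
        | apply continuity_1d_2d_pt_comp; [apply derivable_continuous_pt, derivable_pt_exp|] ].
    - apply filter_forall; intros; apply ex_RInt_heat_integrand. }
  unfold heat_kernel.
  replace (lap _ l) with (/ PI * RInt (fun th => lap (fun m => heat_integrand t m th) l) 0 PI).
  - apply (is_derive_scal (fun s => RInt (heat_integrand s l) 0 PI)), Hint.
  - rewrite RInt_lap by apply ex_RInt_heat_integrand. unfold lap; ring.
Qed.

Lemma heat_kernel_0 l : heat_kernel 0 l = if Z.eq_dec l 0 then 1 else 0.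
Proof.
  unfold heat_kernel.
  rewrite (RInt_ext (heat_integrand 0 l) (fun th => cos (IZR l * th))).
  2: { intros th _; unfold heat_integrand.
       rewrite Rmult_0_r, Rmult_0_l, exp_0, Rmult_1_l; reflexivity. }
  destruct (Z.eq_dec l 0) as [->|Hl].
  - rewrite (RInt_ext _ (fun _ => 1)) by (intros; rewrite Rmult_0_l, cos_0; reflexivity).
    rewrite RInt_const. unfold scal; simpl; unfold mult; simpl.
    field. apply PI_neq0.
  - assert (Hl' : IZR l <> 0) by (apply not_0_IZR; auto).
    assert (Hprim : is_RInt (fun th => cos (IZR l * th)) 0 PI
                      (sin (IZR l * PI) / IZR l - sin (IZR l * 0) / IZR l)).
    { apply (is_RInt_derive (V := R_CompleteNormedModule) (fun th => sin (IZR l * th) / IZR l)).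
      - intros; auto_derive; auto; field; auto.
      - intros; apply (ex_derive_continuous (K := R_AbsRing) (V := R_NormedModule)).
        auto_derive; auto. }
    rewrite (is_RInt_unique _ _ _ _ Hprim).
    rewrite Rmult_0_r, sin_0, sin_eq_0_1 by (exists l; reflexivity).
    unfold Rdiv; ring.
Qed.

Lemma exp_le_1 x : x <= 0 -> exp x <= 1.
Proof.
  intros Hx. rewrite <- exp_0.
  destruct (Rle_lt_or_eq_dec _ _ Hx) as [Hlt | ->];
    [left; apply exp_increasing, Hlt | right; reflexivity].
Qed.

Lemma heat_kernel_bound t l : 0 <= t -> Rabs (heat_kernel t l) <= 1.
Proof.
  intros Ht. pose proof PI_RGT_0 as Hpi.
  unfold heat_kernel. rewrite Rabs_mult, Rabs_right by (left; apply Rinv_0_lt_compat, Hpi).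
  assert (Hint : Rabs (RInt (heat_integrand t l) 0 PI) <= (PI - 0) * 1).
  { apply abs_RInt_le_const; [lra | apply ex_RInt_heat_integrand |].
    intros th _. unfold heat_integrand. rewrite Rabs_mult, Rabs_right by (left; apply exp_pos).
    assert (Hexp : exp (2 * t * (cos th - 1)) <= 1).
    { apply exp_le_1. pose proof (COS_bound th). nra. }
    assert (Hcos : Rabs (cos (IZR l * th)) <= 1) by (apply Rabs_le, COS_bound).
    pose proof (exp_pos (2 * t * (cos th - 1))). pose proof (Rabs_pos (cos (IZR l * th))). nra. }
  apply Rmult_le_reg_l with PI; [exact Hpi|].
  rewrite <- Rmult_assoc, Rinv_r, Rmult_1_l by lra. lra.
Qed.

Lemma heat_kernel_opp t l : heat_kernel t (- l) = heat_kernel t l.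
Proof.
  unfold heat_kernel, heat_integrand; f_equal. apply RInt_ext; intros th _.
  rewrite opp_IZR, Ropp_mult_distr_l_reverse, cos_neg; reflexivity.
Qed.

Lemma heat_kernel_besselI t N :
  exp (- (2 * t)) * besselI N (2 * t) = heat_kernel t (Z.of_nat N).
Proof.
  unfold besselI, heat_kernel.
  rewrite (RInt_ext (heat_integrand t (Z.of_nat N))
             (fun th => exp (- (2 * t)) * (exp (2 * t * cos th) * cos (INR N * th)))).
  2: { intros th _; unfold heat_integrand.
       rewrite <- INR_IZR_INZ, <- Rmult_assoc, <- exp_plus. do 2 f_equal; ring. }
  rewrite (RInt_scal (V := R_CompleteNormedModule));
    [unfold scal; simpl; unfold mult; simpl; ring|].
  apply (ex_RInt_continuous (V := R_CompleteNormedModule)); intros th _.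
  apply (ex_derive_continuous (K := R_AbsRing) (V := R_NormedModule)); auto_derive; auto.
Qed.

(** * A maximum principle on the lattice *)

Definition right_continuous_at (f : R -> R) (T : R) : Prop :=
  forall eps, 0 < eps ->
    exists d, 0 < d /\ forall s, T <= s < T + d -> Rabs (f s - f T) <= eps.

Lemma right_continuous_of_derive f T l : is_derive f T l -> right_continuous_at f T.
Proof.
  intros Hf eps Heps. apply is_derive_Reals in Hf.
  destruct (derivable_continuous_pt _ _ (exist _ _ Hf) eps Heps) as [d [Hd Hnear]].
  exists d; split; [exact Hd|]. intros s Hs.
  destruct (Req_dec s T) as [->|Hne]; [rewrite Rminus_diag, Rabs_R0; lra|].
  left; apply (Hnear s); split; [split; [exact I | auto]|].
  simpl; unfold R_dist; rewrite Rabs_right; lra.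
Qed.

Lemma right_continuous_plus f g T :
  right_continuous_at f T -> right_continuous_at g T ->
  right_continuous_at (fun s => f s + g s) T.
Proof.
  intros Hf Hg eps Heps.
  destruct (Hf (eps / 2)) as [d1 [Hd1 Hf1]]; [lra|].
  destruct (Hg (eps / 2)) as [d2 [Hd2 Hg2]]; [lra|].
  exists (Rmin d1 d2); split; [apply Rmin_glb_lt; auto|]. intros s Hs.
  pose proof (Rmin_l d1 d2); pose proof (Rmin_r d1 d2).
  replace (f s + g s - (f T + g T)) with ((f s - f T) + (g s - g T)) by ring.
  eapply Rle_trans; [apply Rabs_triang|].
  pose proof (Hf1 s ltac:(lra)); pose proof (Hg2 s ltac:(lra)); lra.
Qed.

Lemma right_nonneg_of_pos f T :
  right_continuous_at f T -> 0 < f T ->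
  exists d, 0 < d /\ forall s, T <= s <= T + d -> 0 <= f s.
Proof.
  intros Hf Hpos. destruct (Hf (f T / 2)) as [d [Hd Hnear]]; [lra|].
  exists (d / 2); split; [lra|]. intros s Hs.
  pose proof (Hnear s ltac:(lra)) as Hs'. apply Rabs_le_between in Hs'. lra.
Qed.

Lemma right_nonneg_of_zero_slope f T l :
  is_derive f T l -> f T = 0 -> 0 < l ->
  exists d, 0 < d /\ forall s, T <= s <= T + d -> 0 <= f s.
Proof.
  intros Hf Hzero Hl. apply is_derive_Reals in Hf.
  destruct (Hf (l / 2)) as [[d Hd] Hquot]; [lra|]. simpl in Hquot.
  exists (d / 2); split; [lra|]. intros s Hs.
  destruct (Req_dec s T) as [->|Hne]; [lra|].
  specialize (Hquot (s - T)). replace (T + (s - T)) with s in Hquot by ring.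
  assert (Hq : Rabs ((f s - f T) / (s - T) - l) < l / 2)
    by (apply Hquot; [lra | rewrite Rabs_right; lra]).
  apply Rabs_def2 in Hq. rewrite Hzero in Hq.
  replace (f s) with ((f s - 0) / (s - T) * (s - T)) by (field; lra).
  apply Rmult_le_pos; lra.
Qed.

Lemma left_limit_nonneg f T l :
  is_derive f T l -> 0 < T -> (forall s, 0 <= s < T -> 0 <= f s) -> 0 <= f T.
Proof.
  intros Hf HT Hbefore. apply is_derive_Reals in Hf.
  destruct (Rle_lt_dec 0 (f T)) as [ok|Hneg]; [exact ok|exfalso].
  destruct (derivable_continuous_pt _ _ (exist _ _ Hf) (- f T / 2)) as [d [Hd Hnear]]; [lra|].
  set (s := T - Rmin d T / 2).
  assert (Hmin : 0 < Rmin d T <= d) by (split; [apply Rmin_glb_lt | apply Rmin_l]; lra).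
  pose proof (Rmin_r d T).
  assert (Hs : R_dist (f s) (f T) < - f T / 2).
  { apply Hnear; split; [split; [exact I | unfold s; lra]|].
    simpl; unfold R_dist; rewrite Rabs_left; unfold s; lra. }
  unfold R_dist in Hs; apply Rabs_def2 in Hs.
  pose proof (Hbefore s ltac:(unfold s; lra)). lra.
Qed.

Lemma real_induction (Q : R -> Prop) :
  (forall T, 0 <= T -> (forall s, 0 <= s < T -> Q s) -> Q T) ->
  (forall T, 0 <= T -> (forall s, 0 <= s <= T -> Q s) ->
     exists d, 0 < d /\ forall s, T <= s <= T + d -> Q s) ->
  forall t, 0 <= t -> Q t.
Proof.
  intros Hclosed Hopen t0 Ht0.
  set (E := fun t => 0 <= t <= t0 /\ forall s, 0 <= s <= t -> Q s).
  assert (HQ0 : Q 0) by (apply Hclosed; [lra | intros; lra]).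
  assert (HE0 : E 0) by (split; [lra | intros s Hs; replace s with 0 by lra; exact HQ0]).
  destruct (completeness E) as [T [Hub Hlub]].
  { exists t0; intros t [Ht _]; lra. }
  { exists 0; exact HE0. }
  assert (HT : 0 <= T <= t0) by (split; [apply Hub, HE0 | apply Hlub; intros t [Ht _]; lra]).
  assert (Hbefore : forall s, 0 <= s < T -> Q s).
  { intros s Hs. apply NNPP; intros HnQ.
    assert (T <= s); [|lra]. apply Hlub. intros t [Ht HtQ].
    destruct (Rle_lt_dec t s) as [Hle|Hlt]; [exact Hle|].
    exfalso; apply HnQ, HtQ; lra. }
  assert (HupT : forall s, 0 <= s <= T -> Q s).
  { intros s Hs. destruct (Req_dec s T) as [->|Hne]; [apply Hclosed; tauto | apply Hbefore; lra]. }
  destruct (Req_dec T t0) as [<-|Hne]; [apply HupT; lra|].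
  destruct (Hopen T (proj1 HT) HupT) as [d [Hd Hafter]].
  assert (HEnext : E (Rmin (T + d) t0)).
  { pose proof (Rmin_l (T + d) t0). pose proof (Rmin_r (T + d) t0).
    split; [split; [apply Rmin_glb|]; lra|].
    intros s Hs. destruct (Rle_lt_dec s T); [apply HupT | apply Hafter]; lra. }
  apply Hub in HEnext. unfold Rmin in HEnext. destruct (Rle_dec (T + d) t0); lra.
Qed.

Lemma uniform_radius (P : Z -> R -> Prop) (L : nat) :
  (forall j d d', 0 < d' <= d -> P j d -> P j d') ->
  (forall j, (Z.abs j <= Z.of_nat L)%Z -> exists d, 0 < d /\ P j d) ->
  exists d, 0 < d /\ forall j, (Z.abs j <= Z.of_nat L)%Z -> P j d.
Proof.
  intros Hshrink. induction L as [|L IH]; intros H.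
  - destruct (H 0%Z) as [d [Hd Pd]]; [simpl; lia|]. exists d; split; [exact Hd|].
    intros j Hj. replace j with 0%Z by lia. exact Pd.
  - destruct IH as [d0 [Hd0 P0]]; [intros j Hj; apply H; lia|].
    destruct (H (Z.of_nat (S L))) as [d1 [Hd1 P1]]; [lia|].
    destruct (H (- Z.of_nat (S L))%Z) as [d2 [Hd2 P2]]; [lia|].
    exists (Rmin d0 (Rmin d1 d2)); split; [repeat apply Rmin_glb_lt; auto|].
    pose proof (Rmin_l d0 (Rmin d1 d2)); pose proof (Rmin_r d0 (Rmin d1 d2)).
    pose proof (Rmin_l d1 d2); pose proof (Rmin_r d1 d2).
    assert (0 < Rmin d0 (Rmin d1 d2)) by (repeat apply Rmin_glb_lt; auto).
    intros j Hj.
    destruct (Z_le_gt_dec (Z.abs j) (Z.of_nat L)) as [Hin|Hout].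
    + apply (Hshrink j d0); [split; lra | apply P0; exact Hin].
    + destruct (Z_le_gt_dec 0 j).
      * replace j with (Z.of_nat (S L)) by lia. apply (Hshrink _ d1); [split; lra | exact P1].
      * replace j with (- Z.of_nat (S L))%Z by lia. apply (Hshrink _ d2); [split; lra | exact P2].
Qed.

Lemma strict_supersolution_nonneg (y : R -> Z -> R) (a : Z -> R) (L : nat) :
  (forall j, 0 <= a j) ->
  (forall j, 0 < y 0 j) ->
  (forall j, right_continuous_at (fun s => y s j) 0) ->
  (forall t j, 0 <= t -> (Z.of_nat L < Z.abs j)%Z -> 0 <= y t j) ->
  (forall t j, 0 < t ->
     exists D, is_derive (fun s => y s j) t D /\ lap (y t) j - a j * y t j < D) ->
  forall t j, 0 <= t -> 0 <= y t j.
Proof.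
  intros Ha Hinit Hcont Hfar Hsuper t j Ht. revert j.
  apply (real_induction (fun s => forall j, 0 <= y s j)); [| |exact Ht].
  - intros T HT Hbefore j.
    destruct (Req_dec T 0) as [->|HT0]; [left; apply Hinit|].
    destruct (Hsuper T j) as [D [HD _]]; [lra|].
    apply (left_limit_nonneg _ _ _ HD); [lra|]. intros s Hs; apply Hbefore, Hs.
  - intros T HT Hupto.
    destruct (uniform_radius (fun j d => forall s, T <= s <= T + d -> 0 <= y s j) L)
      as [d [Hd Hnear]].
    + intros i d d' Hd' Hi s Hs; apply Hi; lra.
    + intros i _. destruct (Req_dec T 0) as [->|HT0].
      { apply right_nonneg_of_pos; [apply Hcont | apply Hinit]. }
      destruct (Hsuper T i) as [D [HD Hslope]]; [lra|].
      destruct (Rle_lt_or_eq_dec _ _ (Hupto T ltac:(lra) i)) as [Hpos|Hzero].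
      * apply right_nonneg_of_pos; [eapply right_continuous_of_derive, HD | exact Hpos].
      * (* at a zero of y T, the neighbours are nonnegative, so the laplacian is too *)
        apply (right_nonneg_of_zero_slope _ _ _ HD); [auto|].
        pose proof (Hupto T ltac:(lra) (i - 1)%Z); pose proof (Hupto T ltac:(lra) (i + 1)%Z).
        unfold lap in Hslope. rewrite <- Hzero in Hslope. lra.
    + exists d; split; [exact Hd|]. intros s Hs i.
      destruct (Z_le_gt_dec (Z.abs i) (Z.of_nat L)) as [Hin|Hout];
        [apply Hnear; auto | apply Hfar; [lra | lia]].
Qed.

Definition barrier (s : R) (j : Z) : R := exp (3 * s) * (1 + IZR j ^ 2).

Lemma barrier_derive s j : is_derive (fun x => barrier x j) s (3 * barrier s j).
Proof. unfold barrier; auto_derive; auto; ring. Qed.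

Lemma lap_barrier s j : lap (barrier s) j = 2 * exp (3 * s).
Proof. unfold lap, barrier; rewrite minus_IZR, plus_IZR; ring. Qed.

Lemma exp_le_barrier s j : exp (3 * s) <= barrier s j.
Proof. unfold barrier. pose proof (exp_pos (3 * s)); pose proof (pow2_ge_0 (IZR j)); nra. Qed.

Lemma barrier_large (B eps : R) : 0 < eps ->
  exists L : nat, forall s j, 0 <= s -> (Z.of_nat L < Z.abs j)%Z -> B <= eps * barrier s j.
Proof.
  intros Heps. destruct (archimed (B / eps)) as [Hup _].
  exists (Z.to_nat (up (B / eps))). intros s j Hs Hj.
  assert (Hjl : B / eps <= IZR j ^ 2).
  { assert (Habs : IZR (up (B / eps)) <= Rabs (IZR j)) by (rewrite <- abs_IZR; apply IZR_le; lia).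
    assert (1 <= Rabs (IZR j)) by (rewrite <- abs_IZR; apply IZR_le; lia).
    rewrite <- (pow2_abs (IZR j)). nra. }
  assert (Hb : IZR j ^ 2 <= barrier s j).
  { unfold barrier. pose proof (exp_ineq1_le (3 * s)); pose proof (pow2_ge_0 (IZR j)); nra. }
  apply Rmult_le_compat_l with (r := eps) in Hjl; [|lra].
  replace (eps * (B / eps)) with B in Hjl by (field; lra). nra.
Qed.

Theorem supersolution_nonneg (z : R -> Z -> R) (a : Z -> R) (B : R) :
  (forall j, 0 <= a j) ->
  (forall j, 0 <= z 0 j) ->
  (forall t j, 0 <= t -> - B <= z t j) ->
  (forall j, right_continuous_at (fun s => z s j) 0) ->
  (forall t j, 0 < t ->
     exists D, is_derive (fun s => z s j) t D /\ lap (z t) j - a j * z t j <= D) ->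
  forall t j, 0 <= t -> 0 <= z t j.
Proof.
  intros Ha Hinit Hlow Hcont Hsuper t j Ht.
  assert (Hperturbed : forall eps, 0 < eps -> 0 <= z t j + eps * barrier t j).
  { intros eps Heps. destruct (barrier_large B eps Heps) as [L HL].
    apply (strict_supersolution_nonneg (fun s i => z s i + eps * barrier s i) a L);
      [exact Ha | | | | | exact Ht].
    - intros i. pose proof (Hinit i). pose proof (exp_le_barrier 0 i).
      pose proof (exp_pos (3 * 0)). nra.
    - intros i. apply right_continuous_plus; [apply Hcont|].
      eapply right_continuous_of_derive.
      apply (is_derive_scal (fun s => barrier s i)), barrier_derive.
    - intros s i Hs Hi. pose proof (HL s i Hs Hi); pose proof (Hlow s i Hs); lra.
    - intros s i Hs. destruct (Hsuper s i Hs) as [D [HD Hslope]].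
      exists (D + eps * (3 * barrier s i)). split.
      + apply (is_derive_plus (fun x => z x i)); [exact HD|].
        apply (is_derive_scal (fun x => barrier x i)), barrier_derive.
      + replace (lap (fun k => z s k + eps * barrier s k) i)
          with (lap (z s) i + eps * lap (barrier s) i) by (unfold lap; ring).
        rewrite lap_barrier. pose proof (exp_le_barrier s i); pose proof (exp_pos (3 * s)).
        pose proof (Ha i). assert (0 <= a i * (eps * barrier s i)) by (apply Rmult_le_pos; nra).
        nra. }
  apply Rle_plus_epsilon. intros eps Heps.
  pose proof (exp_le_barrier t j); pose proof (exp_pos (3 * t)).
  replace eps with (eps / barrier t j * barrier t j) by (field; lra).
  apply Hperturbed. apply Rdiv_lt_0_compat; lra.
Qed.

(** * Monotonicity of the kernel in |l| *)

Definition kernel_step (t : R) (m : Z) : R := heat_kernel t m - heat_kernel t (m + 1).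

Lemma kernel_step_derive t m :
  is_derive (fun s => kernel_step s m) t (lap (kernel_step t) m).
Proof.
  replace (lap (kernel_step t) m)
    with (lap (heat_kernel t) m - lap (heat_kernel t) (m + 1)).
  - apply (is_derive_minus (fun s => heat_kernel s m)); apply heat_kernel_derive.
  - unfold lap, kernel_step.
    replace (m + 1 - 1)%Z with m by ring. replace (m - 1 + 1)%Z with m by ring. ring.
Qed.

Lemma kernel_step_opp t m : kernel_step t (- m - 1) = - kernel_step t m.
Proof.
  unfold kernel_step. replace (- m - 1 + 1)%Z with (- m)%Z by ring.
  replace (- m - 1)%Z with (- (m + 1))%Z by ring. rewrite !heat_kernel_opp. ring.
Qed.

(* By [kernel_step_opp], [folded_step t] is [kernel_step t] on [m >= 0] mirrored
   about [-1/2]; the mirror costs the potential [fold_potential] at the sites 0 and -1. *)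
Definition folded_step (t : R) (j : Z) : R :=
  if Z_le_gt_dec 0 j then kernel_step t j else - kernel_step t j.

Definition fold_potential (j : Z) : R :=
  if Z.eq_dec j 0 then 2 else if Z.eq_dec j (-1) then 2 else 0.

Lemma lap_folded_step t j :
  lap (folded_step t) j - fold_potential j * folded_step t j =
  if Z_le_gt_dec 0 j then lap (kernel_step t) j else - lap (kernel_step t) j.
Proof.
  pose proof (kernel_step_opp t 0) as H0; pose proof (kernel_step_opp t 1) as H1.
  simpl in H0, H1.
  unfold lap, folded_step, fold_potential.
  destruct (Z_le_gt_dec 0 j); destruct (Z.eq_dec j 0); destruct (Z.eq_dec j (-1));
    destruct (Z_le_gt_dec 0 (j - 1)); destruct (Z_le_gt_dec 0 (j + 1));
    try lia; try (subst; simpl; lra); ring.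
Qed.

Lemma folded_step_derive t j :
  is_derive (fun s => folded_step s j) t
    (lap (folded_step t) j - fold_potential j * folded_step t j).
Proof.
  rewrite lap_folded_step. unfold folded_step.
  destruct (Z_le_gt_dec 0 j).
  - apply kernel_step_derive.
  - apply (is_derive_opp (fun s => kernel_step s j)), kernel_step_derive.
Qed.

Lemma folded_step_nonneg t j : 0 <= t -> 0 <= folded_step t j.
Proof.
  apply (supersolution_nonneg folded_step fold_potential 2).
  - intros i. unfold fold_potential.
    destruct (Z.eq_dec i 0); [|destruct (Z.eq_dec i (-1))]; lra.
  - intros i. unfold folded_step, kernel_step. rewrite !heat_kernel_0.
    destruct (Z_le_gt_dec 0 i); destruct (Z.eq_dec i 0); destruct (Z.eq_dec (i + 1) 0);
      try lia; lra.
  - intros s i Hs. unfold folded_step, kernel_step.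
    pose proof (heat_kernel_bound s i Hs) as Hi.
    pose proof (heat_kernel_bound s (i + 1) Hs) as Hi1.
    apply Rabs_le_between in Hi, Hi1. destruct (Z_le_gt_dec 0 i); lra.
  - intros i. eapply right_continuous_of_derive, folded_step_derive.
  - intros s i _. eexists; split; [apply folded_step_derive | apply Rle_refl].
Qed.

Lemma heat_kernel_succ_le t m :
  0 <= t -> (0 <= m)%Z -> heat_kernel t (m + 1) <= heat_kernel t m.
Proof.
  intros Ht Hm. pose proof (folded_step_nonneg t m Ht) as H.
  unfold folded_step, kernel_step in H. destruct (Z_le_gt_dec 0 m); [lra | lia].
Qed.

Lemma heat_kernel_abs t l : heat_kernel t (Z.abs l) = heat_kernel t l.
Proof.
  destruct (Z_le_gt_dec 0 l).
  - rewrite Z.abs_eq by lia; reflexivity.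
  - rewrite Z.abs_neq by lia. apply heat_kernel_opp.
Qed.

Lemma heat_kernel_antitone t l m :
  0 <= t -> (Z.abs l <= Z.abs m)%Z -> heat_kernel t m <= heat_kernel t l.
Proof.
  intros Ht Hlm.
  assert (Hstep : forall (n : nat) (a : Z), (0 <= a)%Z ->
            heat_kernel t (a + Z.of_nat n) <= heat_kernel t a).
  { induction n as [|n IH]; intros a Ha.
    - rewrite Z.add_0_r; apply Rle_refl.
    - replace (a + Z.of_nat (S n))%Z with (a + Z.of_nat n + 1)%Z by lia.
      eapply Rle_trans; [apply heat_kernel_succ_le; [exact Ht | lia] | apply IH, Ha]. }
  rewrite <- (heat_kernel_abs t l), <- (heat_kernel_abs t m).
  replace (Z.abs m) with (Z.abs l + Z.of_nat (Z.to_nat (Z.abs m - Z.abs l)))%Z by lia.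
  apply Hstep; lia.
Qed.

(** * Comparison with a superposition of kernels *)

Lemma is_derive_sum_f_R0 (F : nat -> R -> R) (F' : nat -> R) n t :
  (forall i, is_derive (F i) t (F' i)) ->
  is_derive (fun s => sum_f_R0 (fun i => F i s) n) t (sum_f_R0 F' n).
Proof.
  intros HF. induction n as [|n IH]; simpl; [apply HF|].
  apply (is_derive_plus (fun s => sum_f_R0 (fun i => F i s) n) (F (S n))); auto.
Qed.

Lemma lap_sum_f_R0 (F : nat -> Z -> R) n j :
  lap (fun k => sum_f_R0 (fun i => F i k) n) j = sum_f_R0 (fun i => lap (F i) j) n.
Proof.
  induction n as [|n IH]; [reflexivity|].
  simpl. rewrite <- IH. unfold lap. ring.
Qed.

Definition window_solution (w : Z -> R) (c : Z) (n : nat) (s : R) (j : Z) : R :=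
  sum_f_R0 (fun i => w (c - Z.of_nat i)%Z * heat_kernel s (j - (c - Z.of_nat i))) n.

Lemma window_solution_derive w c n t j :
  is_derive (fun s => window_solution w c n s j) t (lap (window_solution w c n t) j).
Proof.
  unfold window_solution. rewrite lap_sum_f_R0.
  apply (is_derive_sum_f_R0
           (fun i s => w (c - Z.of_nat i)%Z * heat_kernel s (j - (c - Z.of_nat i)))).
  intros i. set (ci := (c - Z.of_nat i)%Z).
  replace (lap (fun k => w ci * heat_kernel t (k - ci)) j)
    with (w ci * lap (heat_kernel t) (j - ci)).
  - apply (is_derive_scal (fun s => heat_kernel s (j - ci))), heat_kernel_derive.
  - unfold lap. replace (j - 1 - ci)%Z with (j - ci - 1)%Z by ring.
    replace (j + 1 - ci)%Z with (j - ci + 1)%Z by ring. ring.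
Qed.

Lemma sum_window_delta (w : Z -> R) (c j : Z) n :
  sum_f_R0 (fun i => w (c - Z.of_nat i)%Z *
                     (if Z.eq_dec (j - (c - Z.of_nat i)) 0 then 1 else 0)) n
  = if Z_le_gt_dec (c - Z.of_nat n) j then (if Z_le_gt_dec j c then w j else 0) else 0.
Proof.
  induction n as [|n IH].
  - simpl. destruct (Z.eq_dec (j - (c - 0)) 0); destruct (Z_le_gt_dec (c - 0) j);
      destruct (Z_le_gt_dec j c); try lia; try ring.
    replace j with (c - 0)%Z by lia. ring.
  - rewrite tech5, IH, Nat2Z.inj_succ.
    destruct (Z.eq_dec (j - (c - Z.succ (Z.of_nat n))) 0);
      destruct (Z_le_gt_dec (c - Z.of_nat n) j); destruct (Z_le_gt_dec j c);
      destruct (Z_le_gt_dec (c - Z.succ (Z.of_nat n)) j); try lia; try ring.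
    replace j with (c - Z.succ (Z.of_nat n))%Z by lia. ring.
Qed.

Lemma window_solution_init_le w c n j :
  (forall i, 0 <= w i) -> window_solution w c n 0 j <= w j.
Proof.
  intros Hw. unfold window_solution.
  rewrite (sum_eq _ (fun i => w (c - Z.of_nat i)%Z *
                      (if Z.eq_dec (j - (c - Z.of_nat i)) 0 then 1 else 0)))
    by (intros; rewrite heat_kernel_0; reflexivity).
  rewrite sum_window_delta. pose proof (Hw j).
  destruct (Z_le_gt_dec (c - Z.of_nat n) j); destruct (Z_le_gt_dec j c); lra.
Qed.

Lemma window_solution_le_mass w c n s j :
  0 <= s -> (forall i, 0 <= w i) ->
  window_solution w c n s j <= sum_f_R0 (fun i => w (c - Z.of_nat i)%Z) n.
Proof.
  intros Hs Hw. apply sum_Rle; intros i _.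
  pose proof (heat_kernel_bound s (j - (c - Z.of_nat i)) Hs) as Hk.
  apply Rabs_le_between in Hk. pose proof (Hw (c - Z.of_nat i)%Z). nra.
Qed.

Lemma window_solution_le_solution u0 u c n t j :
  linf_plus u0 -> is_solution u0 u -> 0 <= t -> window_solution u0 c n t j <= u t j.
Proof.
  intros [_ Hu0] [[Hubound Hucont] [Huinit Hueq]] Ht.
  set (W := window_solution u0 c n).
  assert (Hucont0 : forall i, right_continuous_at (fun s => u s i) 0).
  { intros i eps Heps. destruct (Hucont 0 (Rle_refl 0) eps Heps) as [d [Hd Hnear]].
    exists d; split; [exact Hd|]. intros s Hs.
    apply Hnear; [lra | rewrite Rminus_0_r, Rabs_right; lra]. }
  cut (0 <= u t j - W t j); [lra|].
  apply (supersolution_nonneg (fun s i => u s i - W s i) (fun _ => 0)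
           (sum_f_R0 (fun i => u0 (c - Z.of_nat i)%Z) n)); [| | | | | exact Ht].
  - intros; lra.
  - intros i. rewrite Huinit. pose proof (window_solution_init_le u0 c n i Hu0). unfold W; lra.
  - intros s i Hs. destruct (Hubound s Hs) as [_ Hpos]. pose proof (Hpos i).
    pose proof (window_solution_le_mass u0 c n s i Hs Hu0). unfold W; lra.
  - intros i. apply right_continuous_plus; [apply Hucont0|].
    eapply right_continuous_of_derive.
    apply (is_derive_opp (fun s => W s i)), window_solution_derive.
  - intros s i Hs. exists (lap (u s) i - lap (W s) i). split.
    + apply (is_derive_minus (fun x => u x i)); [apply Hueq, Hs | apply window_solution_derive].
    + unfold lap; lra.
Qed.

Lemma Mmass_heat_kernel_le_window u0 k N t :
  (forall i, 0 <= u0 i) -> 0 <= t ->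
  Mmass u0 k N * heat_kernel t (Z.of_nat N) <= window_solution u0 (k + Z.of_nat N) (2 * N) t k.
Proof.
  intros Hu0 Ht. unfold Mmass, window_solution.
  rewrite Rmult_comm, scal_sum. apply sum_Rle; intros i Hi.
  replace (k - (Z.of_nat i - Z.of_nat N))%Z with (k + Z.of_nat N - Z.of_nat i)%Z by ring.
  apply Rmult_le_compat_l; [apply Hu0|].
  apply heat_kernel_antitone; [exact Ht | lia].
Qed.

Theorem lemmaA14 (u0 : Z -> R) (u : R -> Z -> R) :
  linf_plus u0 -> is_solution u0 u ->
  forall (k : Z) (N : nat) (t : R), 0 <= t ->
    Mmass u0 k N * exp (- (2 * t)) * besselI N (2 * t) <= u t k.
Proof.
  intros Hu0 Hu k N t Ht.
  rewrite Rmult_assoc, heat_kernel_besselI.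
  apply Rle_trans with (window_solution u0 (k + Z.of_nat N) (2 * N) t k).
  - apply Mmass_heat_kernel_le_window; [apply Hu0 | exact Ht].
  - apply window_solution_le_solution; assumption.
Qed.
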